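(* Let $\rho=\rho^{ABC}$ be as follows: $A$ is $d$-dimensional, $B=B_1B_2$ with $B_1$ finite-dimensional and $B_2$ a qubit, $C$ a qubit, and $$\rho^{ABC}=p_1\,\rho_1^{AB_1}\otimes|\Psi^+\rangle\langle\Psi^+|^{B_2C}+p_2\,\rho_2^{AB_1}\otimes|\Psi^-\rangle\langle\Psi^-|^{B_2C},$$ with states $\rho_1^{AB_1},\rho_2^{AB_1}$, probabilities $p_1+p_2=1$, and $|\Psi^\pm\rangle=(|01\rangle\pm|10\rangle)/\sqrt2$. Then $S(\rho^{AB})\ge S(\rho^{ABC})$, where $\rho^{AB}=\mathrm{Tr}_C\rho^{ABC}$ and $S$ is the von Neumann entropy (base 2). Moreover, if $S(\rho^{AB})=S(\rho^{ABC})$, then $\rho_1^{AB_1}=\rho_2^{AB_1}$, $p_1=p_2=\tfrac12$, and $\rho^{ABC}$ is separable with respect to the bipartition $AB|C$. Consequently (using that $S(\rho^{AB})>S(\rho^{ABC})$ implies distillability across $AB|C$), no such state is bound entangled across $AB|C$.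
   Context: $S(\rho)=-\mathrm{Tr}\,\rho\log_2\rho$. A state is bound entangled across a cut if it is entangled across that cut but not distillable. *)

From Stdlib Require Import Reals Lra Lia.
Open Scope R_scope.

Definition C : Type := (R * R)%type.
Definition C0 : C := (0, 0).
Definition C1 : C := (1, 0).
Definition RtoC (x : R) : C := (x, 0).
Definition Cadd (z w : C) : C := (fst z + fst w, snd z + snd w).
Definition Cmul (z w : C) : C :=
  (fst z * fst w - snd z * snd w, fst z * snd w + snd z * fst w).
Definition Cconj (z : C) : C := (fst z, - snd z).

Fixpoint Csum (n : nat) (f : nat -> C) : C :=
  match n with O => C0 | S k => Cadd (Csum k f) (f k) end.
Fixpoint Rsum (n : nat) (f : nat -> R) : R :=
  match n with O => 0 | S k => Rsum k f + f k end.

(* ---------- matrices: entries indexed by nat; only indices < n matter ---------- *)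
Definition Mat : Type := nat -> nat -> C.
Definition Vec : Type := nat -> C.

Definition meq (n : nat) (A B : Mat) : Prop :=
  forall i j, (i < n)%nat -> (j < n)%nat -> A i j = B i j.

Definition mmul (n : nat) (A B : Mat) : Mat :=
  fun i j => Csum n (fun k => Cmul (A i k) (B k j)).
Definition madd (A B : Mat) : Mat := fun i j => Cadd (A i j) (B i j).
Definition mscale (a : R) (A : Mat) : Mat := fun i j => Cmul (RtoC a) (A i j).
Definition adjoint (A : Mat) : Mat := fun i j => Cconj (A j i).
Definition idm : Mat := fun i j => if Nat.eqb i j then C1 else C0.
Definition diagm (lam : nat -> R) : Mat :=
  fun i j => if Nat.eqb i j then RtoC (lam i) else C0.
Definition trace (n : nat) (A : Mat) : C := Csum n (fun i => A i i).
Definition msum (K : nat) (F : nat -> Mat) : Mat :=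
  fun i j => Csum K (fun k => F k i j).

(* Kronecker product A (x) B where B acts on an m-dimensional factor;
   composite index i = iA * m + iB (first factor most significant). *)
Definition kron (m : nat) (A B : Mat) : Mat :=
  fun i j => Cmul (A (i / m)%nat (j / m)%nat) (B (i mod m)%nat (j mod m)%nat).

Definition ptrace (m : nat) (A : Mat) : Mat :=
  fun i j => Csum m (fun k => A (i * m + k)%nat (j * m + k)%nat).

Definition proj (v : Vec) : Mat := fun i j => Cmul (v i) (Cconj (v j)).

Definition hermitian (n : nat) (A : Mat) : Prop := meq n (adjoint A) A.
Definition psd (n : nat) (A : Mat) : Prop :=
  forall v : Vec,
    0 <= fst (Csum n (fun i => Cmul (Cconj (v i)) (Csum n (fun j => Cmul (A i j) (v j))))).
Definition density (n : nat) (A : Mat) : Prop :=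
  hermitian n A /\ psd n A /\ trace n A = C1.

Definition unitary (n : nat) (U : Mat) : Prop := meq n (mmul n U (adjoint U)) idm.

Definition log2 (x : R) : R := ln x / ln 2.
Definition plogp (x : R) : R := if Req_EM_T x 0 then 0 else x * log2 x.

(* is_entropy n A s : s = S(A) = - Tr A log2 A, computed from a spectral
   decomposition A = U diag(lam) U^dagger (the eigenvalue multiset, hence s,
   is uniquely determined by A). *)
Definition is_entropy (n : nat) (A : Mat) (s : R) : Prop :=
  exists (U : Mat) (lam : nat -> R),
    unitary n U /\ meq n A (mmul n (mmul n U (diagm lam)) (adjoint U)) /\
    s = - Rsum n (fun i => plogp (lam i)).

Definition separable (nX nY : nat) (rho : Mat) : Prop :=
  exists (K : nat) (q : nat -> R) (sigma tau : nat -> Mat),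
    (forall k, (k < K)%nat -> 0 <= q k /\ density nX (sigma k) /\ density nY (tau k)) /\
    Rsum K q = 1 /\
    meq (nX * nY) rho (msum K (fun k => mscale (q k) (kron nY (sigma k) (tau k)))).

(* basis index of |xy> is 2x+y *)
Definition psi_vec (sgn : R) : Vec :=
  fun i => match i with
           | 1%nat => RtoC (/ sqrt 2)
           | 2%nat => RtoC (sgn / sqrt 2)
           | _ => C0
           end.
Definition psi_plus : Vec := psi_vec 1.
Definition psi_minus : Vec := psi_vec (-1).

(* rho^{ABC} = p1 rho1^{AB1} (x) |Psi+><Psi+|^{B2C} + p2 rho2^{AB1} (x) |Psi-><Psi-|^{B2C},
   factor order A, B1, B2, C. *)
Definition rhoABC (p1 p2 : R) (rho1 rho2 : Mat) : Mat :=
  madd (mscale p1 (kron 4 rho1 (proj psi_plus)))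
       (mscale p2 (kron 4 rho2 (proj psi_minus))).

(* Idea.  rho^{ABC} is supported on the subspace spanned by |x,01> and |x,10>
   (x indexing the factor A B1).  Through the isometry J : C^{2n} -> C^{4n},
   |x,c> |-> |x, 0 1> or |x, 1 0> according to c, it is unitarily equivalent
   to an operator Z on AB (the "restriction" [rho_restrict]), and rho^{AB}
   is the pinching of Z, i.e. the average of Z and of its conjugate by the
   parity sign diag(1,-1) on B2.  Writing eigenvalues r of rho^{ABC} and mu
   of rho^{AB}, the overlaps |<u_i, J_(+/-) v_k>|^2 form two doubly
   stochastic families (on the support of r), mu_k is the average of the two
   "Rayleigh quotients", and convexity of x log x (Jensen, twice) yields
   S(rho^{AB}) >= S(rho^{ABC}) [entropy_pinching_bound].  In the equality
   case every J_+ v_k is an eigenvector of rho^{ABC}, hence Z = rho^{AB};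
   the off-diagonal block of Z is (p1 rho1 - p2 rho2)/2, so p1 rho1 = p2 rho2,
   which forces p1 = p2 = 1/2 and rho1 = rho2, and then
   rho^{ABC} = 1/2 rho1 (x) (|01><01| + |10><10|) is separable across AB|C. *)

From Pilot Require Import Defs.
From Stdlib Require Import Reals Lra Lia.
Open Scope R_scope.

(* [C] alone denotes the binomial coefficient of Stdlib Reals. *)
Notation Cplx := Defs.C.

(** * Complex numbers and finite sums *)

Lemma Cpair_ext (z w : Cplx) : fst z = fst w -> snd z = snd w -> z = w.
Proof. destruct z, w; simpl; intros; subst; auto. Qed.

Ltac cunfold := unfold Cadd, Cmul, Cconj, Defs.C0, Defs.C1, RtoC in *; simpl in *.
Ltac csolve := apply Cpair_ext; cunfold; unfold Rdiv; ring.

Lemma Csum_ext n f g : (forall i, (i < n)%nat -> f i = g i) -> Csum n f = Csum n g.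
Proof.
  revert f g; induction n; intros f g H; simpl; auto.
  rewrite (IHn f g), (H n); auto.
Qed.

Lemma Csum_add n f g : Csum n (fun i => Cadd (f i) (g i)) = Cadd (Csum n f) (Csum n g).
Proof. induction n; simpl; [csolve | rewrite IHn; csolve]. Qed.

Lemma Csum_scal_l n c f : Csum n (fun i => Cmul c (f i)) = Cmul c (Csum n f).
Proof. induction n; simpl; [csolve | rewrite IHn; csolve]. Qed.

Lemma Csum_scal_r n c f : Csum n (fun i => Cmul (f i) c) = Cmul (Csum n f) c.
Proof. induction n; simpl; [csolve | rewrite IHn; csolve]. Qed.

Lemma Csum_zero n f : (forall i, (i < n)%nat -> f i = C0) -> Csum n f = C0.
Proof.
  induction n; intros H; simpl; auto.
  rewrite IHn, H; [csolve | lia | intros; apply H; lia].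
Qed.

Lemma Csum_swap n m (f : nat -> nat -> Cplx) :
  Csum n (fun i => Csum m (fun j => f i j)) = Csum m (fun j => Csum n (fun i => f i j)).
Proof.
  induction n; simpl; [rewrite Csum_zero; auto|].
  rewrite IHn, <- Csum_add; auto.
Qed.

Lemma Csum_plus n m f : Csum (n + m) f = Cadd (Csum n f) (Csum m (fun i => f (n + i)%nat)).
Proof.
  revert n; induction m; intros n; simpl; [rewrite Nat.add_0_r; csolve|].
  rewrite Nat.add_succ_r; simpl; rewrite IHm; csolve.
Qed.

Lemma Csum_blocks n m f :
  Csum (n * m) f = Csum n (fun a => Csum m (fun x => f (a * m + x)%nat)).
Proof.
  induction n; simpl; auto.
  replace (m + n * m)%nat with (n * m + m)%nat by lia.
  rewrite Csum_plus, IHn; auto.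
Qed.

Lemma Csum_delta n i f : (i < n)%nat ->
  Csum n (fun j => if Nat.eqb i j then f j else C0) = f i.
Proof.
  revert i; induction n; intros i Hi; [lia|]. simpl. destruct (Nat.eq_dec i n).
  - subst. rewrite Csum_zero, Nat.eqb_refl; [csolve|].
    intros j Hj. destruct (Nat.eqb_spec n j); [lia | auto].
  - rewrite IHn by lia. destruct (Nat.eqb_spec i n); [lia | csolve].
Qed.

Lemma Csum_delta_r n i f : (i < n)%nat ->
  Csum n (fun j => if Nat.eqb j i then f j else C0) = f i.
Proof.
  intros Hi. rewrite <- (Csum_delta n i f Hi).
  apply Csum_ext; intros. rewrite Nat.eqb_sym; auto.
Qed.

Lemma Cconj_Csum n f : Cconj (Csum n f) = Csum n (fun i => Cconj (f i)).
Proof. induction n; simpl; [csolve | rewrite <- IHn; csolve]. Qed.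

Lemma Csum_mul_Csum n m f g :
  Cmul (Csum n f) (Csum m g) = Csum n (fun k => Csum m (fun l => Cmul (f k) (g l))).
Proof. rewrite <- Csum_scal_r. apply Csum_ext; intros. rewrite Csum_scal_l; auto. Qed.

Lemma Cmul_RtoC_zero c z : c <> 0 -> Cmul (RtoC c) z = C0 -> z = C0.
Proof.
  destruct z as [a b]; intros Hc H. unfold Cmul, RtoC, C0 in H; simpl in H. inversion H.
  unfold C0; f_equal; apply (Rmult_eq_reg_l c); auto; nra.
Qed.

Lemma Rsum_ext n f g : (forall i, (i < n)%nat -> f i = g i) -> Rsum n f = Rsum n g.
Proof.
  revert f g; induction n; intros f g H; simpl; auto.
  rewrite (IHn f g), (H n); auto.
Qed.

Lemma fst_Csum n f : fst (Csum n f) = Rsum n (fun i => fst (f i)).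
Proof. induction n; simpl; auto. rewrite IHn; auto. Qed.

Lemma Rsum_add n f g : Rsum n (fun i => f i + g i) = Rsum n f + Rsum n g.
Proof. induction n; simpl; [ring | rewrite IHn; ring]. Qed.

Lemma Rsum_scal n c f : Rsum n (fun i => c * f i) = c * Rsum n f.
Proof. induction n; simpl; [ring | rewrite IHn; ring]. Qed.

Lemma Rsum_minus n f g : Rsum n (fun i => f i - g i) = Rsum n f - Rsum n g.
Proof. induction n; simpl; [ring | rewrite IHn; ring]. Qed.

Lemma Rsum_const n c : Rsum n (fun _ => c) = INR n * c.
Proof. induction n; simpl; [ring | rewrite IHn; destruct n; simpl; ring]. Qed.

Lemma Rsum_swap n m (f : nat -> nat -> R) :
  Rsum n (fun i => Rsum m (fun j => f i j)) = Rsum m (fun j => Rsum n (fun i => f i j)).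
Proof.
  induction n; simpl.
  - rewrite Rsum_const; ring.
  - rewrite IHn, <- Rsum_add; auto.
Qed.

Lemma Rsum_le n f g : (forall i, (i < n)%nat -> f i <= g i) -> Rsum n f <= Rsum n g.
Proof.
  induction n; intros H; simpl; [lra|].
  apply Rplus_le_compat; [apply IHn; intros; apply H | apply H]; lia.
Qed.

Lemma Rsum_nonneg n f : (forall i, (i < n)%nat -> 0 <= f i) -> 0 <= Rsum n f.
Proof. intros H. rewrite <- (Rmult_0_r (INR n)), <- Rsum_const. apply Rsum_le; auto. Qed.

Lemma Rsum_zero_each n f : (forall i, (i < n)%nat -> 0 <= f i) -> Rsum n f = 0 ->
  forall i, (i < n)%nat -> f i = 0.
Proof.
  induction n; intros Hf Hs i Hi; simpl in *; [lia|].
  assert (0 <= Rsum n f) by (apply Rsum_nonneg; intros; apply Hf; lia).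
  assert (0 <= f n) by (apply Hf; lia).
  destruct (Nat.eq_dec i n); [subst; lra|].
  apply IHn; [intros; apply Hf; lia | lra | lia].
Qed.

Lemma Rsum_le_eq n f g : (forall i, (i < n)%nat -> f i <= g i) -> Rsum n f = Rsum n g ->
  forall i, (i < n)%nat -> f i = g i.
Proof.
  intros Hle Heq i Hi.
  assert (Hz : Rsum n (fun i => g i - f i) = 0) by (rewrite Rsum_minus; lra).
  assert (Hnn : forall j, (j < n)%nat -> 0 <= g j - f j) by (intros j Hj; specialize (Hle j Hj); lra).
  pose proof (Rsum_zero_each n (fun i => g i - f i) Hnn Hz i Hi); simpl in *; lra.
Qed.

Lemma Rsum_delta n i f : (i < n)%nat ->
  Rsum n (fun j => if Nat.eqb i j then f j else 0) = f i.
Proof.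
  intros Hi. pose proof (f_equal fst (Csum_delta n i (fun j => RtoC (f j)) Hi)) as E.
  rewrite fst_Csum in E. simpl in E. rewrite <- E.
  apply Rsum_ext; intros. destruct (Nat.eqb i i0); auto.
Qed.

(** * Inner products, quadratic forms and spectral decompositions *)

Definition inner n (x y : Vec) : Cplx := Csum n (fun i => Cmul (Cconj (x i)) (y i)).
(* Quadratic form  Re <x, A x>; [psd n A] says exactly that it is nonnegative. *)
Definition qf n (A : Mat) (v : Vec) : R :=
  fst (Csum n (fun i => Cmul (Cconj (v i)) (Csum n (fun j => Cmul (A i j) (v j))))).
Definition cn2 (z : Cplx) : R := fst z * fst z + snd z * snd z.
Definition col (U : Mat) (l : nat) : Vec := fun j => U j l.

Lemma cn2_nonneg z : 0 <= cn2 z.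
Proof. unfold cn2; nra. Qed.

Lemma cn2_zero z : cn2 z = 0 -> z = C0.
Proof. destruct z as [a b]; unfold cn2; simpl; intros. unfold C0; f_equal; nra. Qed.

Lemma fst_inner_self n x : fst (inner n x x) = Rsum n (fun i => cn2 (x i)).
Proof. unfold inner. rewrite fst_Csum. apply Rsum_ext; intros. unfold cn2; cunfold; ring. Qed.

Lemma cn2_inner_sym n x y : cn2 (inner n x y) = cn2 (inner n y x).
Proof.
  replace (inner n y x) with (Cconj (inner n x y)); [unfold cn2; cunfold; ring|].
  unfold inner. rewrite Cconj_Csum. apply Csum_ext; intros; csolve.
Qed.

Lemma idm_diag k : idm k k = Defs.C1.
Proof. unfold idm; rewrite Nat.eqb_refl; auto. Qed.

Lemma qf_meq n A B x : meq n A B -> qf n A x = qf n B x.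
Proof.
  intros H. unfold qf. f_equal. apply Csum_ext; intros. f_equal.
  apply Csum_ext; intros. rewrite H; auto.
Qed.

Lemma qf_double_sum n A x : qf n A x =
  Rsum n (fun i => Rsum n (fun j => fst (Cmul (Cmul (Cconj (x i)) (A i j)) (x j)))).
Proof.
  unfold qf. rewrite fst_Csum. apply Rsum_ext; intros.
  rewrite <- Csum_scal_l, fst_Csum. apply Rsum_ext; intros. cunfold; ring.
Qed.

Lemma qf_madd n A B x : qf n (madd A B) x = qf n A x + qf n B x.
Proof.
  rewrite !qf_double_sum, <- Rsum_add. apply Rsum_ext; intros.
  rewrite <- Rsum_add. apply Rsum_ext; intros. unfold madd; cunfold; ring.
Qed.

Lemma qf_mscale n p A x : qf n (mscale p A) x = p * qf n A x.
Proof.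
  rewrite !qf_double_sum, <- Rsum_scal. apply Rsum_ext; intros.
  rewrite <- Rsum_scal. apply Rsum_ext; intros. unfold mscale; cunfold; ring.
Qed.

Lemma qf_idm n x : qf n idm x = Rsum n (fun j => cn2 (x j)).
Proof.
  unfold qf. rewrite fst_Csum. apply Rsum_ext; intros i Hi.
  rewrite (Csum_ext n _ (fun j => if Nat.eqb i j then x j else C0)).
  - rewrite Csum_delta; auto. unfold cn2; cunfold; ring.
  - intros j Hj. unfold idm. destruct (Nat.eqb i j); csolve.
Qed.

Lemma qf_proj n e v : qf n (proj e) v = cn2 (inner n e v).
Proof.
  unfold qf.
  rewrite (Csum_ext n _ (fun i => Cmul (Cmul (Cconj (v i)) (e i)) (inner n e v))).
  - rewrite Csum_scal_r.
    replace (Csum n (fun i => Cmul (Cconj (v i)) (e i))) with (Cconj (inner n e v));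
      [unfold cn2; cunfold; ring|].
    unfold inner. rewrite Cconj_Csum. apply Csum_ext; intros; csolve.
  - intros i Hi. unfold inner, proj. rewrite <- !Csum_scal_l. apply Csum_ext; intros; csolve.
Qed.

Lemma entry_UDU n U lam i j :
  mmul n (mmul n U (diagm lam)) (adjoint U) i j =
  Csum n (fun l => Cmul (Cmul (U i l) (RtoC (lam l))) (Cconj (U j l))).
Proof.
  unfold mmul at 1. apply Csum_ext; intros k Hk. unfold mmul, diagm, adjoint.
  rewrite (Csum_ext n _ (fun p => if Nat.eqb p k then Cmul (U i p) (RtoC (lam p)) else C0)).
  - rewrite Csum_delta_r; auto.
  - intros p Hp. destruct (Nat.eqb p k); auto. csolve.
Qed.

Lemma qf_UDU n U lam x :
  qf n (mmul n (mmul n U (diagm lam)) (adjoint U)) x =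
  Rsum n (fun l => lam l * cn2 (inner n (col U l) x)).
Proof.
  unfold qf.
  rewrite (Csum_ext n _ (fun i => Csum n (fun l =>
     Cmul (Cmul (Cconj (x i)) (U i l)) (Cmul (RtoC (lam l)) (inner n (col U l) x))))).
  2:{ intros i Hi. rewrite (Csum_ext n _ (fun j => Csum n (fun l =>
        Cmul (Cmul (U i l) (RtoC (lam l))) (Cmul (Cconj (U j l)) (x j))))).
      2:{ intros j Hj. rewrite entry_UDU, <- Csum_scal_r. apply Csum_ext; intros; csolve. }
      rewrite Csum_swap, <- Csum_scal_l. apply Csum_ext; intros l Hl.
      unfold inner, col. rewrite <- !Csum_scal_l. apply Csum_ext; intros; csolve. }
  rewrite Csum_swap, fst_Csum. apply Rsum_ext; intros l Hl. rewrite Csum_scal_r.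
  replace (Csum n (fun i => Cmul (Cconj (x i)) (U i l))) with (Cconj (inner n (col U l) x)).
  - unfold cn2; cunfold; ring.
  - unfold inner, col. rewrite Cconj_Csum. apply Csum_ext; intros; csolve.
Qed.

Lemma unitary_entry n U : unitary n U -> forall k l, (k < n)%nat -> (l < n)%nat ->
  Csum n (fun j => Cmul (U k j) (Cconj (U l j))) = idm k l.
Proof. intros HU k l Hk Hl. rewrite <- (HU k l Hk Hl). reflexivity. Qed.

Definition gram n (U : Mat) : Mat := fun i j => Csum n (fun k => Cmul (Cconj (U k i)) (U k j)).

Lemma gram_idempotent n U : unitary n U -> forall i, (i < n)%nat ->
  Csum n (fun j => Cmul (gram n U i j) (gram n U j i)) = gram n U i i.
Proof.
  intros HU i Hi. unfold gram.
  rewrite (Csum_ext n _ (fun j => Csum n (fun k => Csum n (fun l =>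
     Cmul (Cmul (Cconj (U k i)) (U l i)) (Cmul (U k j) (Cconj (U l j))))))).
  2:{ intros j Hj. rewrite Csum_mul_Csum. apply Csum_ext; intros; apply Csum_ext; intros; csolve. }
  rewrite Csum_swap. apply Csum_ext; intros k Hk. rewrite Csum_swap.
  rewrite (Csum_ext n _ (fun l => if Nat.eqb k l then Cmul (Cconj (U k i)) (U l i) else C0)).
  - rewrite Csum_delta; auto.
  - intros l Hl. rewrite Csum_scal_l, unitary_entry; auto. unfold idm.
    destruct (Nat.eqb k l); csolve.
Qed.

Lemma gram_hermitian n U i j : gram n U j i = Cconj (gram n U i j).
Proof. unfold gram. rewrite Cconj_Csum. apply Csum_ext; intros; csolve. Qed.

Lemma gram_trace n U : unitary n U -> Rsum n (fun i => fst (gram n U i i)) = INR n.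
Proof.
  intros HU. rewrite <- fst_Csum. unfold gram. rewrite Csum_swap.
  rewrite (Csum_ext n _ (fun k => RtoC 1)).
  - rewrite fst_Csum. simpl. rewrite Rsum_const. ring.
  - intros k Hk. rewrite <- (Csum_ext n (fun j => Cmul (U k j) (Cconj (U k j)))).
    + rewrite unitary_entry, idm_diag; auto.
    + intros; csolve.
Qed.

(* U U^* = 1 implies U^* U = 1 (finite dimension): with G = U^* U,
   sum_{ij} |1 - G|_{ij}^2 = tr (1 - 2 G + G^2) = tr (1 - G) = 0. *)
Lemma unitary_adjoint_left n U : unitary n U -> meq n (mmul n (adjoint U) U) idm.
Proof.
  intros HU.
  set (D := fun i j => cn2 (Cadd (idm i j) (Cmul (RtoC (-1)) (gram n U i j)))).
  assert (D_row : forall i, (i < n)%nat -> Rsum n (D i) = 1 - fst (gram n U i i)).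
  { intros i Hi.
    rewrite (Rsum_ext n _ (fun j => fst (Cmul (gram n U i j) (gram n U j i)) +
                              (if Nat.eqb i j then 1 - 2 * fst (gram n U j j) else 0))).
    - rewrite Rsum_add, <- fst_Csum, gram_idempotent, Rsum_delta; auto. ring.
    - intros j Hj. unfold D. rewrite (gram_hermitian n U i j). unfold idm.
      destruct (Nat.eqb_spec i j); [subst|]; unfold cn2; cunfold; ring. }
  assert (D_total : Rsum n (fun i => Rsum n (D i)) = 0).
  { rewrite (Rsum_ext n _ (fun i => 1 - fst (gram n U i i))) by auto.
    rewrite Rsum_minus, gram_trace, Rsum_const; auto. ring. }
  intros i j Hi Hj.
  assert (Di := Rsum_zero_each n _
                  (fun i _ => Rsum_nonneg n _ (fun j _ => cn2_nonneg _)) D_total i Hi).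
  assert (Dij := Rsum_zero_each n _ (fun j _ => cn2_nonneg _) Di j Hj).
  apply cn2_zero in Dij. change (gram n U i j = idm i j).
  assert (Ef := f_equal fst Dij). assert (Es := f_equal snd Dij).
  apply Cpair_ext; cunfold; lra.
Qed.

Lemma recover_from_columns n (V A : Mat) : unitary n V -> forall j m, (m < n)%nat ->
  A j m = Csum n (fun k => Cmul (Csum n (fun l => Cmul (A j l) (V l k))) (Cconj (V m k))).
Proof.
  intros HV j m Hm.
  rewrite (Csum_ext n _ (fun k => Csum n (fun l => Cmul (A j l) (Cmul (V l k) (Cconj (V m k)))))).
  2:{ intros. rewrite <- Csum_scal_r. apply Csum_ext; intros; csolve. }
  rewrite Csum_swap, (Csum_ext n _ (fun l => if Nat.eqb l m then A j l else C0)).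
  - rewrite Csum_delta_r; auto.
  - intros l Hl. rewrite Csum_scal_l, (unitary_entry n V HV l m Hl Hm). unfold idm.
    destruct (Nat.eqb l m); csolve.
Qed.

Lemma meq_of_columns n (V A B : Mat) : unitary n V ->
  (forall j k, (j < n)%nat -> (k < n)%nat ->
     Csum n (fun l => Cmul (A j l) (V l k)) = Csum n (fun l => Cmul (B j l) (V l k))) ->
  meq n A B.
Proof.
  intros HV H j m Hj Hm. rewrite !(recover_from_columns n V _ HV j m Hm).
  apply Csum_ext; intros k Hk. rewrite H; auto.
Qed.

Section Spectral.
Variables (n : nat) (U : Mat) (lam : nat -> R) (A : Mat).
Hypothesis HU : unitary n U.
Hypothesis HA : meq n A (mmul n (mmul n U (diagm lam)) (adjoint U)).

Lemma columns_orthonormal l i : (l < n)%nat -> (i < n)%nat ->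
  inner n (col U l) (col U i) = idm l i.
Proof. intros Hl Hi. rewrite <- (unitary_adjoint_left n U HU l i Hl Hi). reflexivity. Qed.

Lemma column_norm i : (i < n)%nat -> Rsum n (fun m => cn2 (U m i)) = 1.
Proof.
  intros Hi. change (fun m => cn2 (U m i)) with (fun m => cn2 (col U i m)).
  rewrite <- fst_inner_self, columns_orthonormal, idm_diag; auto.
Qed.

Lemma parseval x : Rsum n (fun l => cn2 (inner n (col U l) x)) = Rsum n (fun j => cn2 (x j)).
Proof.
  rewrite (Rsum_ext n _ (fun l => 1 * cn2 (inner n (col U l) x))) by (intros; ring).
  rewrite <- qf_UDU, <- qf_idm. apply qf_meq. intros i j Hi Hj. rewrite entry_UDU.
  rewrite <- (unitary_entry n U HU i j Hi Hj). apply Csum_ext; intros; csolve.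
Qed.

Lemma eigval_qf i : (i < n)%nat -> qf n A (col U i) = lam i.
Proof.
  intros Hi. rewrite (qf_meq _ _ _ _ HA), qf_UDU.
  rewrite (Rsum_ext n _ (fun l => if Nat.eqb i l then lam l else 0)); [apply Rsum_delta; auto|].
  intros l Hl. rewrite columns_orthonormal; auto. unfold idm. rewrite Nat.eqb_sym.
  destruct (Nat.eqb_spec i l); subst; unfold cn2; cunfold; ring.
Qed.

Lemma apply_spectral j x : (j < n)%nat ->
  Csum n (fun m => Cmul (A j m) (x m)) =
  Csum n (fun l => Cmul (Cmul (U j l) (RtoC (lam l))) (inner n (col U l) x)).
Proof.
  intros Hj. rewrite (Csum_ext n _ (fun m => Csum n (fun l =>
     Cmul (Cmul (U j l) (RtoC (lam l))) (Cmul (Cconj (U m l)) (x m))))).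
  - rewrite Csum_swap. apply Csum_ext; intros l Hl. unfold inner, col. rewrite Csum_scal_l; auto.
  - intros m Hm. rewrite HA, entry_UDU, <- Csum_scal_r by auto. apply Csum_ext; intros; csolve.
Qed.

Lemma column_eigvec j i : (j < n)%nat -> (i < n)%nat ->
  Csum n (fun m => Cmul (A j m) (U m i)) = Cmul (RtoC (lam i)) (U j i).
Proof.
  intros Hj Hi. change (fun m => Cmul (A j m) (U m i)) with (fun m => Cmul (A j m) (col U i m)).
  rewrite apply_spectral by auto.
  rewrite (Csum_ext n _ (fun l => if Nat.eqb l i then Cmul (RtoC (lam l)) (U j l) else C0)).
  - apply Csum_delta_r; auto.
  - intros l Hl. rewrite columns_orthonormal; auto. unfold idm. destruct (Nat.eqb l i); csolve.
Qed.

Lemma reconstruct j x : (j < n)%nat ->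
  Csum n (fun l => Cmul (U j l) (inner n (col U l) x)) = x j.
Proof.
  intros Hj.
  rewrite (Csum_ext n _ (fun l => Csum n (fun m => Cmul (Cmul (U j l) (Cconj (U m l))) (x m)))).
  - rewrite Csum_swap, (Csum_ext n _ (fun m => if Nat.eqb j m then x m else C0)).
    + apply Csum_delta; auto.
    + intros m Hm. rewrite Csum_scal_r, unitary_entry; auto. unfold idm; destruct (Nat.eqb j m); csolve.
  - intros l Hl. unfold inner, col. rewrite <- Csum_scal_l. apply Csum_ext; intros; csolve.
Qed.

End Spectral.

(** * Convexity of x log2 x *)

Lemma ln2_pos : 0 < ln 2.
Proof. pose proof ln_lt_2. lra. Qed.

Lemma ln_le_sub1 t : 0 < t -> ln t <= t - 1.
Proof. intros Ht. pose proof (exp_ineq1_le (ln t)). rewrite exp_ln in H; lra. Qed.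

Lemma ln_lt_sub1 t : 0 < t -> t <> 1 -> ln t < t - 1.
Proof.
  intros Ht Ht1. assert (ln t <> 0).
  { intro E. apply Ht1. rewrite <- (exp_ln t Ht), E. apply exp_0. }
  pose proof (exp_ineq1 (ln t) H). rewrite exp_ln in H0; lra.
Qed.

Lemma plogp_0 : plogp 0 = 0.
Proof. unfold plogp. destruct (Req_EM_T 0 0); [auto | lra]. Qed.

Lemma plogp_pos x : x <> 0 -> plogp x = x * (ln x / ln 2).
Proof. intros. unfold plogp. destruct (Req_EM_T x 0); [lra | auto]. Qed.

Definition tangent_gap (g x : R) : R := plogp x - plogp g - (ln g + 1) / ln 2 * (x - g).

Lemma tangent_gap_nonneg g x : 0 < g -> 0 <= x ->
  0 <= tangent_gap g x /\ (tangent_gap g x = 0 -> x = g).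
Proof.
  intros Hg Hx. pose proof ln2_pos. unfold tangent_gap. rewrite (plogp_pos g) by lra.
  destruct (Req_dec x 0) as [-> | Hx0].
  - rewrite plogp_0.
    assert (E : 0 - g * (ln g / ln 2) - (ln g + 1) / ln 2 * (0 - g) = g / ln 2) by (field; lra).
    assert (0 < g / ln 2) by (apply Rdiv_lt_0_compat; lra).
    rewrite E. split; [lra | intros; lra].
  - rewrite plogp_pos by auto.
    assert (Hxp : 0 < x) by lra.
    assert (E : x * (ln x / ln 2) - g * (ln g / ln 2) - (ln g + 1) / ln 2 * (x - g)
                = (g - x - x * ln (g / x)) / ln 2).
    { replace (ln (g / x)) with (ln g - ln x); [field; lra|].
      unfold Rdiv. rewrite ln_mult, ln_Rinv; try apply Rinv_0_lt_compat; lra. }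
    rewrite E. assert (Ht : 0 < g / x) by (apply Rdiv_lt_0_compat; lra).
    assert (Hgx : x * (g / x - 1) = g - x) by (field; lra).
    assert (x * ln (g / x) <= x * (g / x - 1))
      by (apply Rmult_le_compat_l; [lra | apply ln_le_sub1; auto]).
    split.
    + apply Rmult_le_pos; [lra | apply Rlt_le, Rinv_0_lt_compat; lra].
    + intro Hz. destruct (Req_dec (g / x) 1) as [E1 | E1].
      * apply (f_equal (Rmult x)) in E1. replace (x * (g / x)) with g in E1 by (field; lra). lra.
      * assert (x * ln (g / x) < x * (g / x - 1))
          by (apply Rmult_lt_compat_l; [lra | apply ln_lt_sub1; auto]).
        assert (0 < (g - x - x * ln (g / x)) / ln 2) by (apply Rdiv_lt_0_compat; lra). lra.
Qed.

Lemma plogp_jensen m (P r : nat -> R) :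
  (forall i, (i < m)%nat -> 0 <= P i) -> (forall i, (i < m)%nat -> 0 <= r i) ->
  Rsum m P = 1 ->
  plogp (Rsum m (fun i => P i * r i)) <= Rsum m (fun i => P i * plogp (r i)) /\
  (plogp (Rsum m (fun i => P i * r i)) = Rsum m (fun i => P i * plogp (r i)) ->
   forall i, (i < m)%nat -> P i <> 0 -> r i = Rsum m (fun i => P i * r i)).
Proof.
  intros HP Hr H1. set (g := Rsum m (fun i => P i * r i)).
  assert (HPr : forall i, (i < m)%nat -> 0 <= P i * r i) by (intros; apply Rmult_le_pos; auto).
  assert (Hg : 0 <= g) by (apply Rsum_nonneg; auto).
  destruct (Req_dec g 0) as [Hg0 | Hg0].
  - assert (Hz : forall i, (i < m)%nat -> P i * r i = 0) by (apply Rsum_zero_each; auto).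
    assert (Hz2 : Rsum m (fun i => P i * plogp (r i)) = Rsum m (fun _ => 0)).
    { apply Rsum_ext. intros i Hi. destruct (Rmult_integral _ _ (Hz i Hi)) as [-> | ->];
      [ring | rewrite plogp_0; ring]. }
    rewrite Hz2, Rsum_const, Hg0, plogp_0. split; [lra|].
    intros _ i Hi HPi. destruct (Rmult_integral _ _ (Hz i Hi)); [contradiction | lra].
  - assert (Hgp : 0 < g) by lra.
    assert (E : Rsum m (fun i => P i * plogp (r i)) - plogp g
                = Rsum m (fun i => P i * tangent_gap g (r i))).
    { rewrite (Rsum_ext m (fun i => P i * tangent_gap g (r i))
                 (fun i => P i * plogp (r i) + (- plogp g) * P i
                           + (- ((ln g + 1) / ln 2)) * (P i * r i)
                           + ((ln g + 1) / ln 2 * g) * P i)) by (intros; unfold tangent_gap; ring).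
      rewrite !Rsum_add, !Rsum_scal, H1. fold g. ring. }
    assert (Hn : forall i, (i < m)%nat -> 0 <= P i * tangent_gap g (r i))
      by (intros; apply Rmult_le_pos; [auto | apply tangent_gap_nonneg; auto]).
    split; [pose proof (Rsum_nonneg m _ Hn); lra|].
    intros Heq i Hi HPi.
    assert (Hz : Rsum m (fun i => P i * tangent_gap g (r i)) = 0) by lra.
    destruct (Rmult_integral _ _ (Rsum_zero_each m _ Hn Hz i Hi)); [contradiction|].
    apply (tangent_gap_nonneg g (r i) Hgp (Hr i Hi)); auto.
Qed.

Lemma plogp_midpoint a b : 0 <= a -> 0 <= b ->
  plogp ((a + b) / 2) <= (plogp a + plogp b) / 2 /\
  (plogp ((a + b) / 2) = (plogp a + plogp b) / 2 -> a = b).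
Proof.
  intros Ha Hb.
  pose proof (plogp_jensen 2 (fun _ => / 2) (fun i => match i with O => a | _ => b end)) as J.
  simpl in J.
  replace (0 + / 2 * a + / 2 * b) with ((a + b) / 2) in J by field.
  replace (0 + / 2 * plogp a + / 2 * plogp b) with ((plogp a + plogp b) / 2) in J by field.
  destruct J as [J1 J2]; [intros; lra | intros [|i] _; lra | field |].
  split; auto. intro He.
  pose proof (J2 He 0%nat ltac:(lia) ltac:(lra)). pose proof (J2 He 1%nat ltac:(lia) ltac:(lra)).
  simpl in *; lra.
Qed.

Lemma column_jensen M N (r : nat -> R) (Q : nat -> nat -> R) :
  (forall i, (i < M)%nat -> 0 <= r i) -> (forall i k, 0 <= Q i k) ->
  (forall k, (k < N)%nat -> Rsum M (fun i => Q i k) = 1) ->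
  (forall i, (i < M)%nat -> r i <> 0 -> Rsum N (Q i) = 1) ->
  Rsum N (fun k => plogp (Rsum M (fun i => Q i k * r i))) <= Rsum M (fun i => plogp (r i)) /\
  (Rsum N (fun k => plogp (Rsum M (fun i => Q i k * r i))) = Rsum M (fun i => plogp (r i)) ->
   forall k i, (k < N)%nat -> (i < M)%nat -> Q i k <> 0 -> r i = Rsum M (fun i => Q i k * r i)).
Proof.
  intros Hr HQ Hcol Hrow.
  assert (J : forall k, (k < N)%nat -> plogp (Rsum M (fun i => Q i k * r i))
                                        <= Rsum M (fun i => Q i k * plogp (r i)))
    by (intros; apply plogp_jensen; auto).
  assert (Tot : Rsum N (fun k => Rsum M (fun i => Q i k * plogp (r i))) = Rsum M (fun i => plogp (r i))).
  { rewrite Rsum_swap. apply Rsum_ext; intros i Hi.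
    rewrite (Rsum_ext N _ (fun k => plogp (r i) * Q i k)) by (intros; ring).
    rewrite Rsum_scal. destruct (Req_dec (r i) 0) as [-> | Hri]; [rewrite plogp_0; ring|].
    rewrite (Hrow i Hi Hri); ring. }
  split; [rewrite <- Tot; apply Rsum_le; auto|].
  intros Heq k i Hk Hi HQi. rewrite <- Tot in Heq.
  apply (proj2 (plogp_jensen M (fun i => Q i k) r (fun i _ => HQ i k) Hr (Hcol k Hk)));
    auto; apply (Rsum_le_eq N _ _ J Heq k Hk).
Qed.

Lemma entropy_pinching_bound M N (r mu : nat -> R) (P P' : nat -> nat -> R) :
  (forall i, (i < M)%nat -> 0 <= r i) ->
  (forall i k, 0 <= P i k) -> (forall i k, 0 <= P' i k) ->
  (forall k, (k < N)%nat -> Rsum M (fun i => P i k) = 1 /\ Rsum M (fun i => P' i k) = 1) ->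
  (forall i, (i < M)%nat -> r i <> 0 ->
     Rsum N (fun k => P i k) = 1 /\ Rsum N (fun k => P' i k) = 1) ->
  (forall k, (k < N)%nat ->
     Rsum M (fun i => P i k * r i) + Rsum M (fun i => P' i k * r i) = 2 * mu k) ->
  Rsum N (fun k => plogp (mu k)) <= Rsum M (fun i => plogp (r i)) /\
  (Rsum N (fun k => plogp (mu k)) = Rsum M (fun i => plogp (r i)) ->
   forall k, (k < N)%nat -> Rsum M (fun i => P i k * r i) = mu k /\
       forall i, (i < M)%nat -> P i k <> 0 -> r i = mu k).
Proof.
  intros Hr HP HP' Hcol Hrow Hsum.
  set (g := fun k => Rsum M (fun i => P i k * r i)).
  set (g' := fun k => Rsum M (fun i => P' i k * r i)).
  destruct (column_jensen M N r P) as [S1 E1]; auto; [apply Hcol | apply Hrow |].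
  destruct (column_jensen M N r P') as [S2 _]; auto; [apply Hcol | apply Hrow |].
  change (Rsum N (fun k => plogp (g k)) <= Rsum M (fun i => plogp (r i))) in S1.
  change (Rsum N (fun k => plogp (g' k)) <= Rsum M (fun i => plogp (r i))) in S2.
  change (Rsum N (fun k => plogp (g k)) = Rsum M (fun i => plogp (r i)) ->
          forall k i, (k < N)%nat -> (i < M)%nat -> P i k <> 0 -> r i = g k) in E1.
  assert (Hmu : forall k, (k < N)%nat -> mu k = (g k + g' k) / 2)
    by (intros k Hk; unfold g, g'; rewrite Hsum; auto; field).
  assert (Mid : forall k, (k < N)%nat -> plogp (mu k) <= (plogp (g k) + plogp (g' k)) / 2).
  { intros k Hk. rewrite Hmu by auto.
    apply plogp_midpoint; apply Rsum_nonneg; intros; apply Rmult_le_pos; auto. }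
  assert (S3 := Rsum_le N _ _ Mid).
  assert (S4 : Rsum N (fun k => (plogp (g k) + plogp (g' k)) / 2) =
               (Rsum N (fun k => plogp (g k)) + Rsum N (fun k => plogp (g' k))) / 2).
  { rewrite (Rsum_ext N _ (fun k => / 2 * plogp (g k) + / 2 * plogp (g' k))) by (intros; field).
    rewrite Rsum_add, !Rsum_scal. field. }
  split; [lra|].
  intros Heq k Hk.
  assert (Mk := Rsum_le_eq N _ _ Mid ltac:(lra) k Hk). simpl in Mk.
  assert (Hgk : g k = mu k).
  { assert (g k = g' k); [|rewrite Hmu by auto; lra].
    rewrite Hmu in Mk by auto.
    apply (plogp_midpoint (g k) (g' k)); auto; apply Rsum_nonneg; intros; apply Rmult_le_pos; auto. }
  split; [exact Hgk|].
  intros i Hi HPi. rewrite <- Hgk. apply E1; auto. lra.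
Qed.

(** * The isometry J : C^(2n) -> C^(4n) onto span{|a,01>, |a,10>} *)

Lemma divmod_split a q m : (q < m)%nat -> ((a * m + q) / m = a /\ (a * m + q) mod m = q)%nat.
Proof.
  intros. split; symmetry; [apply (Nat.div_unique _ _ _ q) | apply (Nat.mod_unique _ _ a q)]; lia.
Qed.

Lemma index_split i m : m <> 0%nat -> exists a q, (q < m)%nat /\ i = (a * m + q)%nat.
Proof.
  intros. exists (i / m)%nat, (i mod m)%nat. split; [apply Nat.mod_upper_bound; auto|].
  pose proof (Nat.div_mod_eq i m). lia.
Qed.

(* |a, c> (c a qubit) is sent to |a, 0 1> if c = 0 and to |a, 1 0> if c = 1. *)
Definition lift_idx (i : nat) : nat := (i / 2 * 4 + 1 + i mod 2)%nat.
(* 1 on even indices, sg on odd ones: the B2 parity operator for sg = -1. *)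
Definition parity_sign (sg : R) (i : nat) : R := if Nat.eqb (i mod 2) 0 then 1 else sg.
(* lift_vec sg w = J (diag(1, sg) w); J_+ and J_- in the overview. *)
Definition lift_vec (sg : R) (w : Vec) : Vec := fun m =>
  if Nat.eqb (m mod 4) 1 then w (m / 4 * 2)%nat
  else if Nat.eqb (m mod 4) 2 then Cmul (RtoC sg) (w (m / 4 * 2 + 1)%nat) else C0.

Lemma lift_idx_0 a : lift_idx (a * 2 + 0) = (a * 4 + 1)%nat.
Proof. unfold lift_idx. destruct (divmod_split a 0 2) as [-> ->]; lia. Qed.
Lemma lift_idx_1 a : lift_idx (a * 2 + 1) = (a * 4 + 2)%nat.
Proof. unfold lift_idx. destruct (divmod_split a 1 2) as [-> ->]; lia. Qed.

Lemma lift_idx_lt n i : (i < n * 2)%nat -> (lift_idx i < n * 2 * 2)%nat.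
Proof.
  intros Hi. destruct (index_split i 2) as [a [x [Hx ->]]]; [lia|].
  destruct x as [|[|]]; try lia; rewrite ?lift_idx_0, ?lift_idx_1; lia.
Qed.

Lemma Csum_lift n f :
  (forall a, (a < n)%nat -> f (a * 4 + 0)%nat = C0 /\ f (a * 4 + 3)%nat = C0) ->
  Csum (n * 2 * 2) f = Csum (n * 2) (fun i => f (lift_idx i)).
Proof.
  intros H. replace (n * 2 * 2)%nat with (n * 4)%nat by lia. rewrite !Csum_blocks.
  apply Csum_ext; intros a Ha. simpl. rewrite lift_idx_0, lift_idx_1.
  destruct (H a Ha) as [-> ->]. csolve.
Qed.

Lemma Rsum_lift n f :
  (forall a, (a < n)%nat -> f (a * 4 + 0)%nat = 0 /\ f (a * 4 + 3)%nat = 0) ->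
  Rsum (n * 2 * 2) f = Rsum (n * 2) (fun i => f (lift_idx i)).
Proof.
  intros H. rewrite <- (fst_Csum _ (fun i => RtoC (f i))),
                    <- (fst_Csum _ (fun i => RtoC (f (lift_idx i)))).
  rewrite Csum_lift; auto. intros a Ha. destruct (H a Ha) as [-> ->]. split; auto.
Qed.

Lemma lift_vec_outside sg w a : lift_vec sg w (a * 4 + 0)%nat = C0 /\ lift_vec sg w (a * 4 + 3)%nat = C0.
Proof.
  unfold lift_vec. destruct (divmod_split a 0 4) as [_ ->]; [lia|].
  destruct (divmod_split a 3 4) as [_ ->]; [lia|]. auto.
Qed.

Lemma lift_vec_idx sg w i : lift_vec sg w (lift_idx i) = Cmul (RtoC (parity_sign sg i)) (w i).
Proof.
  destruct (index_split i 2) as [a [x [Hx ->]]]; [lia|].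
  unfold lift_vec, parity_sign. destruct x as [|[|]]; try lia.
  - rewrite lift_idx_0. destruct (divmod_split a 1 4) as [-> ->]; [lia|].
    destruct (divmod_split a 0 2) as [_ ->]; [lia|]. simpl. rewrite Nat.add_0_r. csolve.
  - rewrite lift_idx_1. destruct (divmod_split a 2 4) as [-> ->]; [lia|].
    destruct (divmod_split a 1 2) as [_ ->]; [lia|]. auto.
Qed.

Lemma parity_sign_1 i : parity_sign 1 i = 1.
Proof. unfold parity_sign; destruct (Nat.eqb _ _); auto. Qed.

Lemma parity_sign_sq sg i : sg * sg = 1 -> parity_sign sg i * parity_sign sg i = 1.
Proof. unfold parity_sign; destruct (Nat.eqb _ _); lra. Qed.

Lemma inner_lift n sg u w :
  inner (n * 2 * 2) u (lift_vec sg w)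
  = inner (n * 2) (fun i => Cmul (RtoC (parity_sign sg i)) (u (lift_idx i))) w.
Proof.
  unfold inner. rewrite Csum_lift.
  - apply Csum_ext; intros. rewrite lift_vec_idx. csolve.
  - intros a _. destruct (lift_vec_outside sg w a) as [-> ->]. split; csolve.
Qed.

Lemma norm_lift n sg w : sg * sg = 1 ->
  Rsum (n * 2 * 2) (fun m => cn2 (lift_vec sg w m)) = Rsum (n * 2) (fun i => cn2 (w i)).
Proof.
  intros Hsg. rewrite Rsum_lift.
  - apply Rsum_ext; intros. rewrite lift_vec_idx.
    pose proof (parity_sign_sq sg i Hsg). unfold cn2 in *; cunfold. nra.
  - intros a _. destruct (lift_vec_outside sg w a) as [-> ->]. unfold cn2; cunfold; split; ring.
Qed.

Lemma norm_unlift n sg u : sg * sg = 1 ->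
  (forall a, (a < n)%nat -> u (a * 4 + 0)%nat = C0 /\ u (a * 4 + 3)%nat = C0) ->
  Rsum (n * 2) (fun i => cn2 (Cmul (RtoC (parity_sign sg i)) (u (lift_idx i))))
  = Rsum (n * 2 * 2) (fun m => cn2 (u m)).
Proof.
  intros Hsg Hu. rewrite Rsum_lift.
  - apply Rsum_ext; intros. pose proof (parity_sign_sq sg i Hsg). unfold cn2 in *; cunfold. nra.
  - intros a Ha. destruct (Hu a Ha) as [-> ->]. unfold cn2; cunfold; split; ring.
Qed.

(** * Structure of rho^{ABC} *)

Lemma inv_sqrt2_sq : / sqrt 2 * / sqrt 2 = / 2.
Proof. rewrite <- Rinv_mult, sqrt_sqrt; lra. Qed.

Definition contract (m : nat) (phi x : Vec) : Vec :=
  fun a => Csum m (fun q => Cmul (Cconj (phi q)) (x (a * m + q)%nat)).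

Lemma qf_kron_proj n m A phi x :
  qf (n * m) (kron m A (proj phi)) x = qf n A (contract m phi x).
Proof.
  unfold qf. f_equal. rewrite Csum_blocks. apply Csum_ext; intros a Ha.
  set (Y := Csum n (fun a' => Cmul (A a a') (contract m phi x a'))).
  rewrite (Csum_ext m _ (fun q => Cmul (Cmul (Cconj (x (a * m + q)%nat)) (phi q)) Y)).
  - rewrite Csum_scal_r. f_equal. unfold contract. rewrite Cconj_Csum. apply Csum_ext; intros; csolve.
  - intros q Hq. rewrite Csum_blocks.
    assert (Hin : Csum n (fun a' => Csum m (fun q' =>
               Cmul (kron m A (proj phi) (a * m + q)%nat (a' * m + q')%nat) (x (a' * m + q')%nat)))
                  = Cmul (phi q) Y).
    { unfold Y. rewrite <- Csum_scal_l. apply Csum_ext; intros a' Ha'. unfold contract.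
      rewrite <- !Csum_scal_l. apply Csum_ext; intros q' Hq'. unfold kron, proj.
      destruct (divmod_split a q m Hq) as [-> ->], (divmod_split a' q' m Hq') as [-> ->]. csolve. }
    rewrite Hin. csolve.
Qed.

Lemma psd_rhoABC n p1 p2 r1 r2 : 0 <= p1 -> 0 <= p2 -> psd n r1 -> psd n r2 ->
  psd (n * 2 * 2) (rhoABC p1 p2 r1 r2).
Proof.
  intros Hp1 Hp2 H1 H2 x. change (0 <= qf (n * 2 * 2) (rhoABC p1 p2 r1 r2) x).
  replace (n * 2 * 2)%nat with (n * 4)%nat by lia. unfold rhoABC.
  rewrite qf_madd, !qf_mscale, !qf_kron_proj.
  apply Rplus_le_le_0_compat; apply Rmult_le_pos; auto; [apply H1 | apply H2].
Qed.

Section RhoEntries.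
Variables (p1 p2 : R) (r1 r2 : Mat).
Local Notation rho := (rhoABC p1 p2 r1 r2).

Lemma rho_block a q a' q' : (q < 4)%nat -> (q' < 4)%nat ->
  rho (a * 4 + q)%nat (a' * 4 + q')%nat =
  Cadd (Cmul (RtoC p1) (Cmul (r1 a a') (proj psi_plus q q')))
       (Cmul (RtoC p2) (Cmul (r2 a a') (proj psi_minus q q'))).
Proof.
  intros Hq Hq'. unfold rhoABC, madd, mscale, kron.
  destruct (divmod_split a q 4 Hq) as [-> ->], (divmod_split a' q' 4 Hq') as [-> ->]. auto.
Qed.

(* rho vanishes outside the range of J (|00> and |11> on B2 C). *)
Lemma rho_outside m m' :
  (m mod 4 = 0 \/ m mod 4 = 3 \/ m' mod 4 = 0 \/ m' mod 4 = 3)%nat -> rho m m' = C0.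
Proof.
  intros H. unfold rhoABC, madd, mscale, kron, proj, psi_plus, psi_minus.
  destruct H as [H|[H|[H|H]]]; rewrite H; cbn [psi_vec]; csolve.
Qed.

Lemma rho_outside_row a m : rho (a * 4 + 0)%nat m = C0 /\ rho (a * 4 + 3)%nat m = C0.
Proof.
  split; apply rho_outside; [left | right; left];
    [destruct (divmod_split a 0 4) | destruct (divmod_split a 3 4)]; lia.
Qed.

(* The restriction Z = J^* rho J of rho to the range of J. *)
Definition rho_restrict : Mat := fun i j => rho (lift_idx i) (lift_idx j).

Lemma rho_restrict_entry i j : rho_restrict i j =
  Cmul (RtoC (/ 2)) (Cadd (Cmul (RtoC p1) (r1 (i / 2)%nat (j / 2)%nat))
     (Cmul (RtoC (p2 * (parity_sign (-1) i * parity_sign (-1) j))) (r2 (i / 2)%nat (j / 2)%nat))).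
Proof.
  rewrite <- inv_sqrt2_sq. unfold rho_restrict.
  destruct (index_split i 2) as [a [x [Hx ->]]]; [lia|].
  destruct (index_split j 2) as [a' [x' [Hx' ->]]]; [lia|].
  unfold parity_sign. destruct (divmod_split a x 2 Hx) as [-> ->], (divmod_split a' x' 2 Hx') as [-> ->].
  destruct x as [|[|]]; try lia; destruct x' as [|[|]]; try lia;
    rewrite ?lift_idx_0, ?lift_idx_1, rho_block by lia;
    unfold proj, psi_plus, psi_minus; cbn [psi_vec Nat.eqb]; csolve.
Qed.

Lemma ptrace_rho_entry i j : ptrace 2 rho i j =
  if Nat.eqb (i mod 2) (j mod 2) then rho_restrict i j else C0.
Proof.
  unfold rho_restrict.
  destruct (index_split i 2) as [a [x [Hx ->]]]; [lia|].
  destruct (index_split j 2) as [a' [x' [Hx' ->]]]; [lia|].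
  destruct (divmod_split a x 2 Hx) as [_ ->], (divmod_split a' x' 2 Hx') as [_ ->].
  unfold ptrace. cbn [Csum].
  destruct x as [|[|]]; try lia; destruct x' as [|[|]]; try lia; cbn [Nat.eqb];
    rewrite ?lift_idx_0, ?lift_idx_1;
    (* each entry of Tr_C rho is a sum of two entries of rho, written in
       base 4 on (B2, C); the entries touching |00> or |11> vanish *)
    repeat match goal with |- context [ ((?a * 2 + ?x) * 2 + ?k)%nat ] =>
      let q := eval compute in (2 * x + k)%nat in
      replace ((a * 2 + x) * 2 + k)%nat with (a * 4 + q)%nat by lia end;
    rewrite ?(rho_outside (_ * 4 + 0)%nat), ?(rho_outside (_ * 4 + 3)%nat),
      ?(rho_outside _ (_ * 4 + 0)%nat), ?(rho_outside _ (_ * 4 + 3)%nat);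
    try csolve;
    first [destruct (divmod_split a 0 4) as [_ ->] | destruct (divmod_split a 3 4) as [_ ->]
          | destruct (divmod_split a' 0 4) as [_ ->] | destruct (divmod_split a' 3 4) as [_ ->]]; lia.
Qed.

Lemma qf_lift n sg w :
  qf (n * 2 * 2) rho (lift_vec sg w)
  = qf (n * 2) rho_restrict (fun i => Cmul (RtoC (parity_sign sg i)) (w i)).
Proof.
  unfold qf. f_equal. rewrite Csum_lift.
  - apply Csum_ext; intros i Hi. rewrite lift_vec_idx. f_equal. rewrite Csum_lift.
    + apply Csum_ext; intros. rewrite lift_vec_idx. auto.
    + intros a _. destruct (lift_vec_outside sg w a) as [-> ->]. split; csolve.
  - intros a _. destruct (lift_vec_outside sg w a) as [-> ->]. split; csolve.
Qed.

Lemma qf_pinching N w :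
  qf N rho_restrict (fun i => Cmul (RtoC (parity_sign 1 i)) (w i))
  + qf N rho_restrict (fun i => Cmul (RtoC (parity_sign (-1) i)) (w i))
  = 2 * qf N (ptrace 2 rho) w.
Proof.
  rewrite !qf_double_sum, <- Rsum_add, <- Rsum_scal. apply Rsum_ext; intros i Hi.
  rewrite <- Rsum_add, <- Rsum_scal. apply Rsum_ext; intros j Hj.
  rewrite ptrace_rho_entry. unfold parity_sign.
  assert (i mod 2 < 2)%nat by (apply Nat.mod_upper_bound; lia).
  assert (j mod 2 < 2)%nat by (apply Nat.mod_upper_bound; lia).
  destruct (i mod 2) as [|[|k]]; try lia; destruct (j mod 2) as [|[|k']]; try lia;
    cbn [Nat.eqb]; cunfold; ring.
Qed.

Lemma apply_lift n j w :
  Csum (n * 2 * 2) (fun m => Cmul (rho (lift_idx j) m) (lift_vec 1 w m))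
  = Csum (n * 2) (fun i => Cmul (rho_restrict j i) (w i)).
Proof.
  rewrite Csum_lift.
  - apply Csum_ext; intros. rewrite lift_vec_idx, parity_sign_1. unfold rho_restrict. csolve.
  - intros a _. destruct (lift_vec_outside 1 w a) as [-> ->]. split; csolve.
Qed.

End RhoEntries.

(** * Entropy comparison between rho^{AB} and rho^{ABC} *)

Section EntropyComparison.
Variables (n : nat) (p1 p2 : R) (rho1 rho2 U V : Mat) (r mu : nat -> R).
Local Notation rho := (rhoABC p1 p2 rho1 rho2).
Hypotheses (Hp1 : 0 <= p1) (Hp2 : 0 <= p2) (Hpsd1 : psd n rho1) (Hpsd2 : psd n rho2).
Hypothesis HU : unitary (n * 2 * 2) U.
Hypothesis HABC : meq (n * 2 * 2) rho (mmul (n * 2 * 2) (mmul (n * 2 * 2) U (diagm r)) (adjoint U)).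
Hypothesis HV : unitary (n * 2) V.
Hypothesis HAB : meq (n * 2) (ptrace 2 rho) (mmul (n * 2) (mmul (n * 2) V (diagm mu)) (adjoint V)).

Definition overlap (sg : R) (i k : nat) : R :=
  cn2 (inner (n * 2 * 2) (col U i) (lift_vec sg (col V k))).

Lemma rho_eigval_nonneg i : (i < n * 2 * 2)%nat -> 0 <= r i.
Proof.
  intros Hi. rewrite <- (eigval_qf _ U r _ HU HABC i Hi).
  apply (psd_rhoABC n p1 p2 rho1 rho2); auto.
Qed.

Lemma overlap_col_sum sg k : sg * sg = 1 -> (k < n * 2)%nat ->
  Rsum (n * 2 * 2) (fun i => overlap sg i k) = 1.
Proof.
  intros Hsg Hk. unfold overlap. rewrite (parseval _ U HU), norm_lift by auto.
  apply (column_norm _ V HV k Hk).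
Qed.

Lemma eigvec_in_range i a : (i < n * 2 * 2)%nat -> r i <> 0 -> (a < n)%nat ->
  U (a * 4 + 0)%nat i = C0 /\ U (a * 4 + 3)%nat i = C0.
Proof.
  intros Hi Hri Ha. split; apply (Cmul_RtoC_zero (r i)); auto;
    rewrite <- (column_eigvec _ U r _ HU HABC) by lia; apply Csum_zero; intros m _;
    [rewrite (proj1 (rho_outside_row p1 p2 rho1 rho2 a m))
    | rewrite (proj2 (rho_outside_row p1 p2 rho1 rho2 a m))]; csolve.
Qed.

Lemma overlap_row_sum sg i : sg * sg = 1 -> (i < n * 2 * 2)%nat -> r i <> 0 ->
  Rsum (n * 2) (fun k => overlap sg i k) = 1.
Proof.
  intros Hsg Hi Hri. unfold overlap.
  rewrite (Rsum_ext _ _ (fun k => cn2 (inner (n * 2) (col V k)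
             (fun j => Cmul (RtoC (parity_sign sg j)) (col U i (lift_idx j)))))).
  - rewrite (parseval _ V HV), norm_unlift by (auto; intros; apply eigvec_in_range; auto).
    apply (column_norm _ U HU i Hi).
  - intros. rewrite inner_lift, cn2_inner_sym. auto.
Qed.

Lemma overlap_weighted_sum sg k :
  Rsum (n * 2 * 2) (fun i => overlap sg i k * r i) = qf (n * 2 * 2) rho (lift_vec sg (col V k)).
Proof. rewrite (qf_meq _ _ _ _ HABC), qf_UDU. apply Rsum_ext; intros. unfold overlap; ring. Qed.

Lemma overlap_average k : (k < n * 2)%nat ->
  Rsum (n * 2 * 2) (fun i => overlap 1 i k * r i)
  + Rsum (n * 2 * 2) (fun i => overlap (-1) i k * r i) = 2 * mu k.
Proof.
  intros Hk. rewrite !overlap_weighted_sum, !qf_lift, qf_pinching.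
  rewrite (eigval_qf _ V mu _ HV HAB k Hk). reflexivity.
Qed.

Lemma entropy_sums :
  Rsum (n * 2) (fun k => plogp (mu k)) <= Rsum (n * 2 * 2) (fun i => plogp (r i)) /\
  (Rsum (n * 2) (fun k => plogp (mu k)) = Rsum (n * 2 * 2) (fun i => plogp (r i)) ->
   forall k, (k < n * 2)%nat -> Rsum (n * 2 * 2) (fun i => overlap 1 i k * r i) = mu k /\
     forall i, (i < n * 2 * 2)%nat -> overlap 1 i k <> 0 -> r i = mu k).
Proof.
  apply (entropy_pinching_bound _ _ r mu (overlap 1) (overlap (-1))).
  - exact rho_eigval_nonneg.
  - intros; apply cn2_nonneg.
  - intros; apply cn2_nonneg.
  - intros k Hk. split; apply overlap_col_sum; auto; lra.
  - intros i Hi Hri. split; apply overlap_row_sum; auto; lra.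
  - exact overlap_average.
Qed.

Section Equality.
Hypothesis Heq : Rsum (n * 2) (fun k => plogp (mu k)) = Rsum (n * 2 * 2) (fun i => plogp (r i)).

Lemma lifted_eigvec k j : (k < n * 2)%nat -> (j < n * 2 * 2)%nat ->
  Csum (n * 2 * 2) (fun m => Cmul (rho j m) (lift_vec 1 (col V k) m))
  = Cmul (RtoC (mu k)) (lift_vec 1 (col V k) j).
Proof.
  intros Hk Hj. rewrite (apply_spectral _ U r _ HABC j _ Hj).
  rewrite (Csum_ext _ _ (fun l => Cmul (RtoC (mu k))
             (Cmul (U j l) (inner (n * 2 * 2) (col U l) (lift_vec 1 (col V k)))))).
  - rewrite Csum_scal_l, (reconstruct _ U HU j _ Hj). auto.
  - intros l Hl. destruct (Req_dec (overlap 1 l k) 0) as [H0 | H0].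
    + unfold overlap in H0. apply cn2_zero in H0. rewrite H0. csolve.
    + rewrite (proj2 (proj2 entropy_sums Heq k Hk) l Hl H0). csolve.
Qed.

Lemma restricted_eigvec k j : (k < n * 2)%nat -> (j < n * 2)%nat ->
  Csum (n * 2) (fun i => Cmul (rho_restrict p1 p2 rho1 rho2 j i) (V i k)) = Cmul (RtoC (mu k)) (V j k).
Proof.
  intros Hk Hj. change (fun i => Cmul (rho_restrict p1 p2 rho1 rho2 j i) (V i k))
    with (fun i => Cmul (rho_restrict p1 p2 rho1 rho2 j i) (col V k i)).
  rewrite <- apply_lift, lifted_eigvec, lift_vec_idx, parity_sign_1 by (auto; apply lift_idx_lt; auto).
  unfold col. csolve.
Qed.

Lemma restrict_eq_ptrace : meq (n * 2) (rho_restrict p1 p2 rho1 rho2) (ptrace 2 rho).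
Proof.
  apply (meq_of_columns _ V _ _ HV). intros j k Hj Hk.
  rewrite restricted_eigvec, (column_eigvec _ V mu _ HV HAB); auto.
Qed.

End Equality.
End EntropyComparison.

(* The off-diagonal B2-block of Z is (p1 rho1 - p2 rho2)/2, while that of
   rho^{AB} vanishes; so Z = rho^{AB} forces p1 rho1 = p2 rho2. *)
Lemma balanced_of_restrict_eq n p1 p2 rho1 rho2 :
  meq (n * 2) (rho_restrict p1 p2 rho1 rho2) (ptrace 2 (rhoABC p1 p2 rho1 rho2)) ->
  forall a a', (a < n)%nat -> (a' < n)%nat ->
    Cmul (RtoC p1) (rho1 a a') = Cmul (RtoC p2) (rho2 a a').
Proof.
  intros HZ a a' Ha Ha'.
  pose proof (HZ (a * 2 + 0)%nat (a' * 2 + 1)%nat ltac:(lia) ltac:(lia)) as E.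
  rewrite ptrace_rho_entry, rho_restrict_entry in E. unfold parity_sign in E.
  destruct (divmod_split a 0 2) as [Ea1 Ea2]; [lia|].
  destruct (divmod_split a' 1 2) as [Eb1 Eb2]; [lia|].
  rewrite Ea1, Ea2, Eb1, Eb2 in E. cbn [Nat.eqb] in E.
  apply Cmul_RtoC_zero in E; [|lra].
  assert (Ef := f_equal fst E). assert (Es := f_equal snd E). apply Cpair_ext; cunfold; lra.
Qed.

Lemma entropy_comparison n rho1 rho2 p1 p2 sAB sABC :
  psd n rho1 -> psd n rho2 -> 0 <= p1 -> 0 <= p2 ->
  is_entropy (n * 2) (ptrace 2 (rhoABC p1 p2 rho1 rho2)) sAB ->
  is_entropy (n * 2 * 2) (rhoABC p1 p2 rho1 rho2) sABC ->
  sABC <= sAB /\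
  (sAB = sABC -> forall a a', (a < n)%nat -> (a' < n)%nat ->
     Cmul (RtoC p1) (rho1 a a') = Cmul (RtoC p2) (rho2 a a')).
Proof.
  intros Hpsd1 Hpsd2 Hp1 Hp2 [V [mu [HV [HAB ->]]]] [U [r [HU [HABC ->]]]].
  destruct (entropy_sums n p1 p2 rho1 rho2 U V r mu) as [Hle _]; auto.
  split; [lra|]. intros Heq.
  apply balanced_of_restrict_eq, (restrict_eq_ptrace n p1 p2 rho1 rho2 U V r mu); auto; lra.
Qed.

(** * The equality case: equal weights and separability *)

(* Two states with p1 rho1 = p2 rho2 and p1 + p2 = 1: comparing traces gives
   p1 = p2 = 1/2, hence rho1 = rho2. *)
Lemma balanced_weights n rho1 rho2 p1 p2 :
  trace n rho1 = Defs.C1 -> trace n rho2 = Defs.C1 -> p1 + p2 = 1 ->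
  (forall a a', (a < n)%nat -> (a' < n)%nat ->
     Cmul (RtoC p1) (rho1 a a') = Cmul (RtoC p2) (rho2 a a')) ->
  p1 = / 2 /\ p2 = / 2 /\ meq n rho1 rho2.
Proof.
  intros T1 T2 Hp H.
  assert (Hpp : p1 = p2).
  { assert (T : Cmul (RtoC p1) (trace n rho1) = Cmul (RtoC p2) (trace n rho2)).
    { unfold trace. rewrite <- !Csum_scal_l. apply Csum_ext; intros; apply H; auto. }
    rewrite T1, T2 in T. apply (f_equal fst) in T. cunfold. lra. }
  assert (Half : p1 = / 2) by lra.
  repeat split; try lra.
  intros a a' Ha Ha'. specialize (H a a' Ha Ha'). rewrite <- Hpp, Half in H.
  assert (F := f_equal fst H). assert (S := f_equal snd H). apply Cpair_ext; cunfold; lra.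
Qed.

Definition unit_qubit (e : Vec) : Prop := Csum 2 (fun x => Cmul (e x) (Cconj (e x))) = Defs.C1.

Lemma density_proj e : unit_qubit e -> density 2 (proj e).
Proof.
  intros He. split; [|split].
  - intros i j _ _. unfold adjoint, proj. csolve.
  - intros v. change (0 <= qf 2 (proj e) v). rewrite qf_proj. apply cn2_nonneg.
  - exact He.
Qed.

Lemma density_kron_proj n A e : density n A -> unit_qubit e -> density (n * 2) (kron 2 A (proj e)).
Proof.
  intros [HA [HP HT]] He. split; [|split].
  - intros i j Hi Hj. unfold adjoint, kron, proj.
    assert (i / 2 < n)%nat by (apply Nat.Div0.div_lt_upper_bound; lia).
    assert (j / 2 < n)%nat by (apply Nat.Div0.div_lt_upper_bound; lia).
    pose proof (HA (i / 2)%nat (j / 2)%nat H H0) as E. unfold adjoint in E. rewrite <- E. csolve.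
  - intros v. change (0 <= qf (n * 2) (kron 2 A (proj e)) v). rewrite qf_kron_proj. apply HP.
  - unfold trace. rewrite Csum_blocks.
    rewrite (Csum_ext n _ (fun a => Cmul (A a a) (Csum 2 (fun x => Cmul (e x) (Cconj (e x)))))).
    + rewrite He, Csum_scal_r. unfold trace in HT. rewrite HT. csolve.
    + intros a Ha. rewrite <- Csum_scal_l. apply Csum_ext; intros x Hx. unfold kron, proj.
      destruct (divmod_split a x 2 Hx) as [-> ->]. auto.
Qed.

Definition ket (b : nat) : Vec := fun i => if Nat.eqb i b then Defs.C1 else C0.

Lemma ket_unit b : (b < 2)%nat -> unit_qubit (ket b).
Proof. intros Hb. unfold unit_qubit, ket. destruct b as [|[|]]; try lia; simpl; csolve. Qed.

Lemma kron_kron_entry A B D a q a' q' : (q < 4)%nat -> (q' < 4)%nat ->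
  kron 2 (kron 2 A B) D (a * 4 + q)%nat (a' * 4 + q')%nat =
  Cmul (Cmul (A a a') (B (q / 2)%nat (q' / 2)%nat)) (D (q mod 2)%nat (q' mod 2)%nat).
Proof.
  assert (Idx : forall a q, (q < 4)%nat ->
    ((a * 4 + q) / 2 / 2 = a /\ (a * 4 + q) / 2 mod 2 = q / 2 /\ (a * 4 + q) mod 2 = q mod 2)%nat).
  { intros x y Hy. destruct (divmod_split (x * 2 + y / 2) (y mod 2) 2) as [E1 E2];
      [apply Nat.mod_upper_bound; lia|].
    destruct (divmod_split x (y / 2) 2) as [F1 F2]; [apply Nat.Div0.div_lt_upper_bound; lia|].
    replace (x * 4 + y)%nat with ((x * 2 + y / 2) * 2 + y mod 2)%nat
      by (pose proof (Nat.div_mod_eq y 2); lia).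
    rewrite E1, E2, F1, F2. auto. }
  intros Hq Hq'. unfold kron.
  destruct (Idx a q Hq) as [-> [-> ->]], (Idx a' q' Hq') as [-> [-> ->]]. auto.
Qed.

Lemma psi_proj_entries sg : sg * sg = 1 ->
  proj (psi_vec sg) 1%nat 1%nat = RtoC (/ 2) /\ proj (psi_vec sg) 1%nat 2%nat = RtoC (sg / 2) /\
  proj (psi_vec sg) 2%nat 1%nat = RtoC (sg / 2) /\ proj (psi_vec sg) 2%nat 2%nat = RtoC (/ 2).
Proof.
  intros Hsg. pose proof inv_sqrt2_sq as S2. unfold proj; cbn.
  repeat split; apply Cpair_ext; cunfold; unfold Rdiv; try ring; rewrite <- S2; try ring.
  transitivity (sg * sg * (/ sqrt 2 * / sqrt 2)); [ring | rewrite Hsg; ring].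
Qed.

(* (rho1 (x) Psi+ + rho1 (x) Psi-)/2 = 1/2 (rho1 (x) |0><0|) (x) |1><1|
   + 1/2 (rho1 (x) |1><1|) (x) |0><0|, a separable state across AB|C. *)
Lemma separable_equal_mixture n rho1 : density n rho1 ->
  separable (n * 2) 2 (rhoABC (/ 2) (/ 2) rho1 rho1).
Proof.
  intros Hd.
  exists 2%nat, (fun _ => / 2),
    (fun k => kron 2 rho1 (proj (ket k))), (fun k => proj (ket (1 - k))).
  split; [|split].
  - intros k Hk. split; [lra | split];
      [apply density_kron_proj | apply density_proj]; auto; apply ket_unit; lia.
  - simpl. lra.
  - intros i j Hi Hj.
    destruct (index_split i 4) as [a [q [Hq ->]]]; [lia|].
    destruct (index_split j 4) as [a' [q' [Hq' ->]]]; [lia|].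
    rewrite rho_block by auto. unfold msum, mscale. cbn [Csum].
    rewrite !kron_kron_entry by auto. unfold psi_plus, psi_minus.
    destruct (psi_proj_entries 1) as [P11 [P12 [P21 P22]]]; [lra|].
    destruct (psi_proj_entries (-1)) as [M11 [M12 [M21 M22]]]; [lra|].
    destruct q as [|[|[|[|]]]]; try lia; destruct q' as [|[|[|[|]]]]; try lia;
      cbn [Nat.div Nat.modulo Nat.divmod Nat.sub fst snd];
      rewrite ?P11, ?P12, ?P21, ?P22, ?M11, ?M12, ?M21, ?M22;
      unfold proj, ket; cbn [psi_vec Nat.eqb Nat.sub];
      apply Cpair_ext; cunfold; field; apply Rgt_not_eq, sqrt_lt_R0; lra.
Qed.

Lemma separable_meq N M A B : separable N M A -> meq (N * M) A B -> separable N M B.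
Proof.
  intros [K [q [s [t [H1 [H2 H3]]]]]] HAB. exists K, q, s, t. split; [exact H1 | split; [exact H2|]].
  intros i j Hi Hj. rewrite <- HAB by auto. apply H3; auto.
Qed.

Lemma rhoABC_meq_r n p1 p2 r1 r2 r2' : meq n r2 r2' ->
  meq (n * 2 * 2) (rhoABC p1 p2 r1 r2) (rhoABC p1 p2 r1 r2').
Proof.
  intros H i j Hi Hj. unfold rhoABC, madd, mscale, kron.
  rewrite H; auto; apply Nat.Div0.div_lt_upper_bound; lia.
Qed.

Theorem mainTheorem5 (d b : nat) (rho1 rho2 : Mat) (p1 p2 : R)
  (Distillable : Mat -> Prop) :
  density (d * b) rho1 -> density (d * b) rho2 ->
  0 <= p1 -> 0 <= p2 -> p1 + p2 = 1 ->
  forall sAB sABC : R,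
    is_entropy (d * b * 2) (ptrace 2 (rhoABC p1 p2 rho1 rho2)) sAB ->
    is_entropy (d * b * 2 * 2) (rhoABC p1 p2 rho1 rho2) sABC ->
    (sABC < sAB -> Distillable (rhoABC p1 p2 rho1 rho2)) ->
    sABC <= sAB /\
    (sAB = sABC ->
       meq (d * b) rho1 rho2 /\ p1 = / 2 /\ p2 = / 2 /\
       separable (d * b * 2) 2 (rhoABC p1 p2 rho1 rho2)) /\
    ~ (~ separable (d * b * 2) 2 (rhoABC p1 p2 rho1 rho2) /\
       ~ Distillable (rhoABC p1 p2 rho1 rho2)).
Proof.
  intros Hd1 Hd2 Hp1 Hp2 Hp sAB sABC HAB HABC Hdist.
  pose proof Hd1 as [_ [Hpsd1 T1]]. pose proof Hd2 as [_ [Hpsd2 T2]].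
  destruct (entropy_comparison (d * b) rho1 rho2 p1 p2 sAB sABC) as [Hle Hbal]; auto.
  assert (Equality : sAB = sABC -> meq (d * b) rho1 rho2 /\ p1 = / 2 /\ p2 = / 2 /\
                       separable (d * b * 2) 2 (rhoABC p1 p2 rho1 rho2)).
  { intros E. destruct (balanced_weights (d * b) rho1 rho2 p1 p2) as [-> [-> Hm]]; auto.
    repeat split; auto.
    apply (separable_meq _ _ (rhoABC (/ 2) (/ 2) rho1 rho1));
      [apply separable_equal_mixture; auto | apply rhoABC_meq_r; auto]. }
  split; [exact Hle | split; [exact Equality|]].
  intros [Hns Hnd]. destruct (Rle_lt_or_eq_dec _ _ Hle) as [Hlt | Heq].
  - apply Hnd, Hdist, Hlt.
  - apply Hns, Equality; auto.
Qed.
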